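(* Let $n \geq 1$ and $g \in G_n$, and for $\alpha$ coprime to $\mathrm{ord}(g)$ let $S_{g,\alpha} = \{h \in G_n : hgh^{-1} = g^{\alpha}\}$. (i) If $q_n(g) = 0$ and $g \ne \mathrm{id}$, then $\mathrm{ord}(g)=3$ and $S_{g,\alpha} = G_n$ if $\alpha \equiv 1 \bmod 3$, $S_{g,\alpha}=\varnothing$ otherwise. (ii) If $q_n(g) \neq 0$, then $S_{g,\alpha} = \varnothing$ unless $\alpha \equiv 1 \bmod \mathrm{ord}(g)$, and the centralizer $S_{g,1}$ of $g$ has size $3\cdot 9^n$ if $\pi_0(q_n(g)) \neq 0$; size $27^n$ if $\pi_0(q_n(g)) = 0$ and $\pi_i(q_n(g)) \neq 0$ for some $1\le i\le n$; and size $3 \cdot 27^n$ if $\pi_0(q_n(g)) = 0$ and $\pi_i(q_n(g)) = 0$ for all $1 \le i \le n$.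
   Context: Let $A_n = \mathbb{Z}/3\mathbb{Z} \oplus (\mathbb{Z}/9\mathbb{Z})^n$, $\pi_0: A_n \to \mathbb{Z}/3\mathbb{Z}$ the projection onto the first factor, and for $1\le i\le n$, $\pi_i: A_n \to \mathbb{Z}/3\mathbb{Z}$ the projection onto the $i$-th copy of $\mathbb{Z}/9\mathbb{Z}$ followed by reduction mod $3$. Let $\theta(a,b) = (\pi_0(a)\pi_i(b))_{1\le i\le n}$. $G_n$ is the set $(\mathbb{Z}/3\mathbb{Z})^n \times A_n$ with multiplication $(c_1,a_1)(c_2,a_2) = (c_1+c_2+\theta(a_1,a_2), a_1+a_2)$, and $q_n: G_n \to A_n$ is the projection to the second coordinate. *)

From HB Require Import structures.
From mathcomp Require Import all_boot all_order all_algebra all_fingroup.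
Set Implicit Arguments. Unset Strict Implicit. Unset Printing Implicit Defensive.
Import GRing.Theory.
Local Open Scope ring_scope.

Definition An (n : nat) : Type := ('Z_3 * {ffun 'I_n -> 'Z_9})%type.

Definition pi0 {n} (a : An n) : 'Z_3 := a.1.
(* pi_i : A_n -> Z/3, i-th copy of Z/9 reduced mod 3 (i : 'I_n indexes 1..n) *)
Definition pii {n} (i : 'I_n) (a : An n) : 'Z_3 := (val (a.2 i))%:R.

Definition theta {n} (a b : An n) : {ffun 'I_n -> 'Z_3} :=
  [ffun i => pi0 a * pii i b].

Definition Gn (n : nat) : Type := ({ffun 'I_n -> 'Z_3} * An n)%type.

HB.instance Definition _ n := Finite.on (Gn n).

Definition Gmul {n} (x y : Gn n) : Gn n :=
  (x.1 + y.1 + theta x.2 y.2, x.2 + y.2).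
Definition Gone {n} : Gn n := (0, 0).
Definition Ginv {n} (x : Gn n) : Gn n := (- x.1 + theta x.2 x.2, - x.2).

Lemma pii_add n (i : 'I_n) (a b : An n) : pii i (a + b) = pii i a + pii i b.
Proof.
rewrite /pii /= !ffunE /= -natrD.
apply/val_inj => /=.
rewrite !Zp_nat /=; by rewrite modn_dvdm.
Qed.

Lemma theta_addl n (a b c : An n) : theta (a + b) c = theta a c + theta b c.
Proof. by apply/ffunP => i; rewrite !ffunE /pi0 /= mulrDl. Qed.

Lemma theta_addr n (a b c : An n) : theta a (b + c) = theta a b + theta a c.
Proof. by apply/ffunP => i; rewrite !ffunE pii_add mulrDr. Qed.

Lemma theta_oppl n (a c : An n) : theta (- a) c = - theta a c.
Proof. by apply/ffunP => i; rewrite !ffunE /pi0 /= mulNr. Qed.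

Lemma acl (V : zmodType) (a b c d e f : V) :
  a + (b + c + f) + (d + e) = a + b + d + c + (e + f).
Proof.
rewrite -!addrA; congr (a + (b + _)).
by rewrite [e + f]addrC (addrCA d c) (addrCA d f).
Qed.

Lemma GmulA n : associative (@Gmul n).
Proof.
move=> x y z; rewrite /Gmul /=; congr (_, _); last by rewrite addrA.
rewrite theta_addl theta_addr.
by apply/ffunP => i; rewrite !ffunE acl.
Qed.

Lemma Gmul1 n : left_id (@Gone n) Gmul.
Proof.
move=> [c a]; rewrite /Gmul /Gone /=.
have -> : theta (0 : An n) a = 0 by apply/ffunP => i; rewrite !ffunE /pi0 /= mul0r.
by rewrite add0r addr0 add0r.
Qed.

Lemma GmulV n : left_inverse (@Gone n) Ginv Gmul.
Proof.
move=> [c a]; rewrite /Gmul /Gone /Ginv /=.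
rewrite theta_oppl; congr (_, _); last exact: addNr.
by rewrite (addrAC (- c)) addNr add0r subrr.
Qed.

HB.instance Definition _ n := Finite_isGroup.Build (Gn n) (@GmulA n) (@Gmul1 n) (@GmulV n).

Definition qn {n} (g : Gn n) : An n := g.2.

Definition Sga {n} (g : Gn n) (alpha : nat) : {set Gn n} :=
  [set h : Gn n | (h * g * h^-1 == g ^+ alpha)%g].

(* Write g = (c, a) with a = q_n(g).  Two formulas drive everything:
     h g h^-1 = (c + theta(h.2, a) - theta(a, h.2), a)          (conjg_Gn)
     g ^+ k   = (k c + C(k,2) theta(a, a), k a)                   (expg_Gn)
   (i)  If a = 0, g is central, and g ^+ 3 = 1 because (Z/3)^n has
        exponent 3; so ord(g) = 3 and S_{g,alpha} is all of G_n or empty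
        according to whether g ^+ alpha = g, i.e. alpha = 1 mod 3.
   (ii) If a <> 0 and h g h^-1 = g ^+ alpha, comparing second coordinates
        gives alpha a = a.  As A_n has exponent 9, a nonzero multiple
        relation (alpha - 1) a = 0 forces 3 | alpha - 1, and then
        g ^+ (alpha - 1) = 1 since 3 divides C(3m, 2); hence
        alpha = 1 mod ord(g).  The centralizer is (Z/3)^n times the set of
        b in A_n with theta(b, a) = theta(a, b), counted coordinatewise in
        the three cases of the statement. *)

From mathcomp Require Import all_boot all_order all_algebra all_fingroup.
From mathcomp Require Import cyclic ring.
Set Implicit Arguments. Unset Strict Implicit. Unset Printing Implicit Defensive.
Import GRing.Theory.

(* The binomial coefficient C(3m, 2) = 3m(3m-1)/2 is a multiple of 3; this
   kills the cocycle part of g ^+ (3m). *)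
Lemma dvd3_bin2_mul3 m : 3 %| 'C(3 * m, 2).
Proof.
have h2 : 3 %| 'C(3 * m, 2) * 2`! by rewrite bin_ffact ffactnS dvdn_mulr ?dvdn_mulr.
by rewrite Gauss_dvdl in h2.
Qed.

Local Open Scope ring_scope.

Lemma mulrn_gcdn_eq0 (V : zmodType) (a : V) m k :
  (0 < m)%N -> a *+ m = 0 -> a *+ k = 0 -> a *+ gcdn m k = 0.
Proof.
move=> m_gt0 am ak; have [u _ /dvdnP[t e]] := Bezoutl k m_gt0.
have : a *+ (gcdn m k + u * k) = 0 by rewrite e mulnC mulrnA am mul0rn.
by rewrite mulrnDr mulnC mulrnA ak mul0rn addr0.
Qed.

Lemma Zp_mulrn_char p (z : 'Z_p) : (1 < p)%N -> z *+ p = 0.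
Proof. by move=> p_gt1; rewrite -mulr_natr pchar_Zp // mulr0. Qed.

Lemma Z3_sqr (x : 'Z_3) : x != 0 -> x * x = 1.
Proof. by case: x => -[|[|[|?]]] //= ? _; apply/val_inj. Qed.

Lemma Z3_mul_eq0 (y p : 'Z_3) : p != 0 -> (y * p == 0) = (y == 0).
Proof.
move=> p_nz; apply/eqP/eqP => [yp0|->]; last exact: mul0r.
by rewrite -[y]mulr1 -(Z3_sqr p_nz) mulrA yp0 mul0r.
Qed.

Lemma Z3_solve (x y p q : 'Z_3) : x != 0 -> (y * p == x * q) = (q == x * y * p).
Proof.
move=> x_nz; apply/eqP/eqP => [e|->].
  by rewrite -mulrA e mulrA Z3_sqr // mul1r.
by rewrite !mulrA Z3_sqr // mul1r.
Qed.

Lemma card_Z9_lifts (k : 'Z_3) : #|[pred z : 'Z_9 | (val z)%:R == k]| = 3%N.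
Proof.
rewrite -sum1_card big_mkcond /= !big_ord_recl big_ord0 /=.
by case: k => -[|[|[|m]]] ?.
Qed.

Lemma card_pairs_fiberwise (T1 T2 : finType) (Q : pred (T1 * T2)) :
  #|Q| = (\sum_(y : T1) #|[pred z | Q (y, z)]|)%N.
Proof.
rewrite -sum1_card; under [RHS]eq_bigr => y _ do rewrite -sum1_card.
by rewrite pair_big_dep; apply: eq_bigl => -[y z].
Qed.

Section Gn.
Variable n : nat.

Lemma pii0 (i : 'I_n) : pii i (0 : An n) = 0.
Proof. by rewrite /pii ffunE. Qed.

Lemma piiN (i : 'I_n) (b : An n) : pii i (- b) = - pii i b.
Proof. by apply/eqP; rewrite -subr_eq0 opprK -pii_add addNr pii0. Qed.

Lemma theta0l (b : An n) : theta 0 b = 0.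
Proof. by apply/ffunP => i; rewrite !ffunE /pi0 /= mul0r. Qed.

Lemma theta0r (b : An n) : theta b 0 = 0.
Proof. by apply/ffunP => i; rewrite !ffunE pii0 mulr0. Qed.

Lemma theta_oppr (a b : An n) : theta a (- b) = - theta a b.
Proof. by apply/ffunP => i; rewrite !ffunE piiN mulrN. Qed.

Lemma theta_mulrnl (a b : An n) k : theta (a *+ k) b = theta a b *+ k.
Proof.
elim: k => [|k IH]; first by rewrite !mulr0n theta0l.
by rewrite !mulrS theta_addl IH.
Qed.

Lemma Z3n_mulrn3 (c : {ffun 'I_n -> 'Z_3}) : c *+ 3 = 0.
Proof. by apply/ffunP => i; rewrite ffunMnE !ffunE Zp_mulrn_char. Qed.

Lemma An_mulrn9 (a : An n) : a *+ 9 = 0.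
Proof.
case: a => c f; rewrite pairMnE /= (mulrnA c 3 3) Zp_mulrn_char //.
by congr pair; apply/ffunP => i; rewrite ffunMnE !ffunE Zp_mulrn_char.
Qed.

(* A nonzero element of A_n has additive order 3 or 9, so its annihilating
   multiples are all divisible by 3. *)
Lemma An_mulrn_eq0_dvd3 (a : An n) k : a != 0 -> a *+ k = 0 -> (3 %| k)%N.
Proof.
move=> a_nz ak; apply: contraNT a_nz => n3k.
have /eqP gcd1 : coprime (3 ^ 2) k by rewrite coprime_pexpl ?prime_coprime.
by have := @mulrn_gcdn_eq0 _ a 9 k isT (An_mulrn9 a) ak; rewrite gcd1 mulr1n => ->.
Qed.

Lemma GmulE (x y : Gn n) : (x * y)%g = Gmul x y. Proof. by []. Qed.

Lemma conjg_Gn (h g : Gn n) :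
  (h * g * h^-1)%g = (g.1 + theta h.2 g.2 - theta g.2 h.2, g.2).
Proof.
rewrite !GmulE /Gmul /= theta_addl !theta_oppr; congr pair.
  by apply/ffunP => i; rewrite !ffunE; ring.
by rewrite addrAC subrr add0r.
Qed.

Lemma expg_Gn (g : Gn n) k :
  (g ^+ k)%g = (g.1 *+ k + theta g.2 g.2 *+ 'C(k, 2), g.2 *+ k).
Proof.
elim: k => [|k IH]; first by rewrite expg0 !mulr0n addr0.
rewrite expgSr GmulE IH /Gmul /= theta_mulrnl binS bin1 !mulrSr mulrnDr.
congr pair; rewrite -!addrA; congr (_ + _); exact: addrCA.
Qed.

Lemma expg_mul3 (g : Gn n) m : (g ^+ (3 * m))%g = (0, g.2 *+ (3 * m)).
Proof.
rewrite expg_Gn; have /dvdnP[t ->] := dvd3_bin2_mul3 m.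
by rewrite mulrnA Z3n_mulrn3 mul0rn (mulrnA _ t 3) Z3n_mulrn3 addr0.
Qed.

Lemma conjg_central (g h : Gn n) : g.2 = 0 -> (h * g * h^-1)%g = g.
Proof.
move=> g2; rewrite conjg_Gn g2 theta0r theta0l subr0 addr0.
by case: g g2 => ? ? /= ->.
Qed.

Lemma order_central (g : Gn n) : g.2 = 0 -> g != 1%g -> #[g]%g = 3%N.
Proof.
move=> g2 g_nt; have g3 : (g ^+ (3 * 1))%g = 1%g by rewrite expg_mul3 g2 mul0rn.
apply: prime_nt_dvdP => //; first by rewrite order_eq1.
by rewrite order_dvdn g3.
Qed.

Lemma expg_eq_self (g : Gn n) k : g.2 != 0 -> g.2 *+ k = g.2 -> (g ^+ k)%g = g.
Proof.
case: k => [|k] g2_nz; first by rewrite mulr0n => e; rewrite -e eqxx in g2_nz.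
rewrite mulrSr -[X in _ = X]add0r => /addIr gk.
have /dvdnP[m km] := An_mulrn_eq0_dvd3 g2_nz gk.
by rewrite expgSr km mulnC expg_mul3 -mulnC -km gk; apply: mul1g.
Qed.

Definition theta_comm (a : An n) : pred (An n) :=
  [pred b | theta b a == theta a b].

Lemma theta_commE (a b : An n) :
  (b \in theta_comm a) = [forall i, pi0 b * pii i a == pi0 a * pii i b].
Proof.
rewrite inE; apply/eqP/forallP => [e i | e].
  by move/ffunP: e => /(_ i); rewrite !ffunE => ->.
by apply/ffunP => i; rewrite !ffunE; apply/eqP.
Qed.

Lemma card_centralizer (g : Gn n) : #|Sga g 1| = (3 ^ n * #|theta_comm g.2|)%N.
Proof.
have e : Sga g 1 =i [predX predT & theta_comm g.2].
  move=> h; rewrite !inE expg1 conjg_Gn /=.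
  case: g => c a /=; rewrite xpair_eqE eqxx andbT.
  by rewrite -addrA -{2}[c]addr0 (inj_eq (addrI c)) subr_eq0.
by rewrite (eq_card e) cardX card_ffun !card_ord.
Qed.

(* pi_0(a) <> 0: the first coordinate of b is free and determines each
   pi_i(b), leaving three lifts to Z/9 for every i. *)
Lemma card_theta_comm_pi0 (a : An n) : pi0 a != 0 ->
  #|theta_comm a| = (3 * 3 ^ n)%N.
Proof.
move=> a0_nz; rewrite card_pairs_fiberwise.
rewrite (eq_bigr (fun _ => 3 ^ n)%N) ?sum_nat_const ?card_ord // => y _.
pose lifts i := [pred z : 'Z_9 | (val z)%:R == pi0 a * y * pii i a].
have e : [pred z | theta_comm a (y, z)] =i family lifts.
  move=> f; rewrite !inE -[theta_comm a _]/((y, f) \in theta_comm a) theta_commE.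
  by apply/forallP/familyP => H i; have := H i; rewrite /= Z3_solve.
rewrite (eq_card e) card_family foldrE big_map big_enum /=.
by rewrite (eq_bigr (fun _ => 3%N)) => [|i _]; rewrite ?prod_nat_const ?card_ord ?card_Z9_lifts.
Qed.

(* pi_0(a) = 0 but some pi_i(a) <> 0: b commutes iff pi_0(b) = 0. *)
Lemma card_theta_comm_pii (a : An n) : pi0 a = 0 -> (exists i, pii i a != 0) ->
  #|theta_comm a| = (9 ^ n)%N.
Proof.
move=> a0 [j aj_nz].
have e : theta_comm a =i [predX pred1 0 & predT].
  move=> b; rewrite theta_commE !inE a0 andbT; apply/forallP/idP => [H | /eqP b0 i].
    by have := H j; rewrite mul0r Z3_mul_eq0.
  by rewrite /pi0 b0 !mul0r.
by rewrite (eq_card e) cardX card1 card_ffun !card_ord mul1n.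
Qed.

(* All projections of a vanish: every b commutes. *)
Lemma card_theta_comm_triv (a : An n) : pi0 a = 0 -> (forall i, pii i a = 0) ->
  #|theta_comm a| = (3 * 9 ^ n)%N.
Proof.
move=> a0 ai; have e : theta_comm a =i predT.
  by move=> b; rewrite theta_commE; apply/forallP => i; rewrite ai a0 mulr0 mul0r.
by rewrite (eq_card e) card_prod card_ffun !card_ord.
Qed.

End Gn.

Local Open Scope group_scope.

Theorem mainTheorem7 (n : nat) (g : Gn n) : (1 <= n)%N ->
  (* (i) *)
  ((qn g = 0%R) -> g != 1 ->
     #[g] = 3%N /\
     (forall alpha : nat, coprime alpha #[g] ->
        (alpha = 1 %[mod 3] -> Sga g alpha = [set: Gn n]) /\
        (alpha <> 1 %[mod 3] -> Sga g alpha = set0)))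
  /\
  (* (ii) *)
  ((qn g != 0%R) ->
     (forall alpha : nat, coprime alpha #[g] ->
        alpha <> 1 %[mod #[g]] -> Sga g alpha = set0) /\
     (pi0 (qn g) != 0%R -> #|Sga g 1| = (3 * 9 ^ n)%N) /\
     (pi0 (qn g) = 0%R -> (exists i : 'I_n, pii i (qn g) != 0%R) ->
        #|Sga g 1| = (27 ^ n)%N) /\
     (pi0 (qn g) = 0%R -> (forall i : 'I_n, pii i (qn g) = 0%R) ->
        #|Sga g 1| = (3 * 27 ^ n)%N)).
Proof.
move=> _; rewrite /qn; split=> [g2 g_nt | g2_nz].
  have o3 := order_central g2 g_nt; split=> // alpha _.
  have Sg : Sga g alpha = if g ^+ alpha == g then [set: Gn n] else set0.
    by apply/setP=> h; rewrite inE conjg_central // eq_sym; case: eqP; rewrite !inE.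
  rewrite Sg -{2}(expg1 g) eq_expg_mod_order o3.
  by split=> [/eqP -> | /eqP/negbTE ->].
split=> [alpha _ alpha_n1 | ].
  apply/setP=> h; rewrite !inE conjg_Gn; apply/negbTE/eqP => e.
  apply: alpha_n1; apply/eqP; rewrite -eq_expg_mod_order expg1 expg_eq_self //.
  by have := congr1 snd e; rewrite expg_Gn /= => <-.
split=> [a0 | ]; first by rewrite card_centralizer card_theta_comm_pi0 // mulnCA -expnMn.
have e27 : (27 ^ n = 3 ^ n * 9 ^ n)%N by rewrite -expnMn.
split=> [a0 ai | a0 ai]; rewrite card_centralizer e27.
- by rewrite card_theta_comm_pii.
- by rewrite card_theta_comm_triv // mulnCA.
Qed.
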